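(* Let $n\ge 2$ and let $\mathcal{A}=\langle Q,\Sigma,\delta\rangle$ be an $n$-state DFA whose transition monoid is $T_n$, with $x\in\Sigma$ a fixed letter of rank $n-1$. Then the digraph $\Gamma_{2n-3}$ is strongly connected.
   Context: Words act on states letter by letter from left to right. The transition monoid is the monoid of transformations of $Q$ generated by the letters; $T_n$ is the monoid of all self-maps of an $n$-element set. A letter has rank $n-1$ if $|Q\cdot x|=n-1$. For such $x$, $\mathrm{excl}(x)$ is the unique state in $Q\setminus Q\cdot x$, and $\mathrm{dupl}(x)$ is the unique state $p$ with $p=q_1\cdot x=q_2\cdot x$ for some $q_1\ne q_2$. Let $\Pi\subseteq\Sigma$ be the set of letters acting as permutations of $Q$, and $\Pi^i$ the set of words of length at most $i$ over $\Pi$ (including the empty word). $\Gamma_i$ is the digraph with vertex set $Q$ and edge set $E_i=\{(\mathrm{excl}(x)\cdot w,\ \mathrm{dupl}(x)\cdot w)\mid w\in\Pi^i\}$. A digraph is strongly connected if for every ordered pair of vertices there is a directed path from the first to the second. *)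

From mathcomp Require Import all_boot.
From Stdlib Require Import Relations.
Set Implicit Arguments. Unset Strict Implicit. Unset Printing Implicit Defensive.

Section DFA.
Variables (Q Sigma : finType) (delta : Sigma -> Q -> Q).

Definition act (q : Q) (w : seq Sigma) : Q := foldl (fun p a => delta a p) q w.

Definition full_transition_monoid : Prop :=
  forall f : Q -> Q, exists w : seq Sigma, forall q, act q w = f q.

Definition image_of (x : Sigma) : {set Q} := [set delta x q | q : Q].

Definition rank_pred (x : Sigma) : Prop := #|image_of x| = #|Q| - 1.

(* excl(x): a state not in Q . x (unique when x has rank n-1) *)
Definition is_excl (x : Sigma) (e : Q) : Prop := e \notin image_of x.

(* dupl(x): a state with two distinct preimages (unique when x has rank n-1) *)
Definition is_dupl (x : Sigma) (d : Q) : Prop :=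
  exists q1 q2 : Q, q1 <> q2 /\ delta x q1 = d /\ delta x q2 = d.

Definition is_perm_letter (a : Sigma) : bool := injectiveb (delta a).

Definition in_Pi_i (i : nat) (w : seq Sigma) : bool :=
  all is_perm_letter w && (size w <= i).

Definition Gamma_edge (x : Sigma) (i : nat) (p q : Q) : Prop :=
  exists e d w, is_excl x e /\ is_dupl x d /\ in_Pi_i i w /\
                p = act e w /\ q = act d w.

Definition strongly_connected (E : Q -> Q -> Prop) : Prop :=
  forall p q : Q, clos_refl_trans Q E p q.

End DFA.

From Pilot Require Import Defs.
From mathcomp Require Import all_boot perm zify boolp.
From Stdlib Require Import Relations.

(* Write e = excl(x) and d = dupl(x); all that matters is e != d.  The
   permutation letters generate the symmetric group, so every state is d.w
   for a permutation word w of length at most n-1; hence every vertex of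
   Gamma_{n-1} has an in-edge (e.w, d.w), and Gamma_{n-1} contains a cycle.
   For i >= n-1 the strongly connected components of Gamma_i are therefore
   fewer than n, and while there are at least two of them, Gamma_{i+1} has
   strictly fewer: otherwise mutual reachability in Gamma_i would be invariant
   under every permutation, hence total by 2-transitivity.  After n-2 further
   steps, Gamma_{2n-3} is strongly connected. *)

Set Implicit Arguments. Unset Strict Implicit. Unset Printing Implicit Defensive.

Section Classes.
Variable T : finType.

Definition eqclass (r : rel T) (x : T) : {set T} := [set y | r x y].
Definition nclasses (r : rel T) : nat := #|[set eqclass r x | x : T]|.

Variable r : rel T.
Hypothesis r_eqv : equivalence_rel r.

Lemma eqclass_eq x y : (eqclass r x == eqclass r y) = r x y.
Proof.
have [r_refl r_ltr] := (equivalence_relP r).1 r_eqv.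
apply/eqP/idP => [/setP/(_ y)|rxy]; first by rewrite !inE r_refl.
by apply/setP => z; rewrite !inE (r_ltr _ _ rxy).
Qed.

Lemma nclasses_le1P : reflect (forall x y, r x y) (nclasses r <= 1).
Proof.
apply: (iffP card_le1_eqP) => [cl1 x y | r_total _ _ /imsetP[x _ ->] /imsetP[y _ ->]].
  by rewrite -eqclass_eq; apply/eqP/cl1; apply: imset_f.
by apply/eqP; rewrite eqclass_eq.
Qed.

Lemma nclasses_lt_card x y : x != y -> r x y -> nclasses r < #|T|.
Proof.
move=> neq_xy rxy; rewrite /nclasses ltn_neqAle leq_imset_card andbT.
apply/negP => /imset_injP inj_cl; move/negP: neq_xy; apply.
by apply/eqP/inj_cl; rewrite ?inE //; apply/eqP; rewrite eqclass_eq.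
Qed.

End Classes.

Section Refinement.
Variables (T : finType) (r r' : rel T).
Hypotheses (r_eqv : equivalence_rel r) (r'_eqv : equivalence_rel r').
Hypothesis sub_rr' : subrel r r'.

(* Each [r']-class is the [r']-saturation of any [r]-class inside it. *)
Let saturate (C : {set T}) : {set T} := [set z | [exists p in C, r' p z]].

Let saturate_eqclass x : saturate (eqclass r x) = eqclass r' x.
Proof.
have [r'_refl r'_ltr] := (equivalence_relP r').1 r'_eqv.
apply/setP => z; rewrite !inE; apply/existsP/idP => [[p /andP[]]|r'xz].
  by rewrite inE => /sub_rr' r'xp; rewrite (r'_ltr _ _ r'xp).
by exists x; rewrite inE ((equivalence_relP r).1 r_eqv).1.
Qed.

Let eqclasses_saturate :
  [set eqclass r' x | x : T] = saturate @: [set eqclass r x | x : T].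
Proof. by rewrite -imset_comp; apply: eq_imset => x /=; rewrite saturate_eqclass. Qed.

Lemma nclasses_le : nclasses r' <= nclasses r.
Proof. by rewrite /nclasses eqclasses_saturate leq_imset_card. Qed.

Lemma nclasses_lt : ~ subrel r' r -> nclasses r' < nclasses r.
Proof.
move=> not_sub; rewrite /nclasses eqclasses_saturate ltn_neqAle leq_imset_card andbT.
apply/negP => /imset_injP inj_sat; apply: not_sub => x y r'xy.
rewrite -(eqclass_eq r_eqv); apply/eqP/inj_sat; rewrite ?imset_f //.
by rewrite !saturate_eqclass; apply/eqP; rewrite (eqclass_eq r'_eqv).
Qed.

End Refinement.

Lemma bounded_descent (f : nat -> nat) (m : nat) :
  (forall i, f i.+1 <= f i) -> (forall i, m < f i -> f i.+1 < f i) ->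
  forall j, f j <= maxn m (f 0 - j).
Proof.
move=> f_noninc f_dec; elim=> [|j IHj]; first lia.
have := f_noninc j; case: (leqP (f j) m) => [|/f_dec]; lia.
Qed.

Section Digraphs.
Variable T : finType.

Lemma connect_homo (T' : finType) (e : rel T) (e' : rel T') (f : T -> T') :
  {homo f : x y / e x y >-> e' x y} -> {homo f : x y / connect e x y >-> connect e' x y}.
Proof.
move=> f_homo x _ /connectP[p + ->].
elim: p x => [|z p IHp] x /=; first by rewrite connect0.
by case/andP=> /f_homo/connect1 exz /IHp; apply: connect_trans.
Qed.

Lemma connect_clos_refl_trans (e : rel T) (E : relation T) :
  (forall x y, e x y -> E x y) -> forall x y, connect e x y -> clos_refl_trans T E x y.
Proof.
move=> sub_eE x _ /connectP[p + ->]; elim: p x => [|z p IHp] x /=.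
  by move=> _; apply: rt_refl.
by case/andP=> /sub_eE exz /IHp; apply: rt_trans; apply: rt_step.
Qed.

(* A vertex minimising its set of ancestors lies on a cycle through its predecessor. *)
Lemma exists_cycle (e : rel T) (x0 : T) :
  (forall y, exists x, e x y) -> exists x y, e x y /\ connect e y x.
Proof.
move=> has_pred.
have [y _ min_y] := @arg_minnP _ x0 predT (fun y => #|[set z | connect e z y]|) isT.
have [x exy] := has_pred y; exists x, y; split=> //.
have sub_anc : [set z | connect e z x] \subset [set z | connect e z y].
  by apply/subsetP => z; rewrite !inE => /connect_trans; apply; apply: connect1.
have /setP/(_ y) : [set z | connect e z x] = [set z | connect e z y].
  by apply/eqP; rewrite eqEcard sub_anc min_y.
by rewrite !inE connect0.
Qed.

End Digraphs.

Section PermutationLetters.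
Variables (Q Sigma : finType) (delta : Sigma -> Q -> Q).

Local Notation act := (act delta).
Local Notation perml := (is_perm_letter delta).
Local Notation Pi := (in_Pi_i delta).

Lemma act_rcons q w a : act q (rcons w a) = delta a (act q w).
Proof. by rewrite /Defs.act foldl_rcons. Qed.

Lemma act_cat q w1 w2 : act q (w1 ++ w2) = act (act q w1) w2.
Proof. by rewrite /Defs.act foldl_cat. Qed.

Lemma all_perm_letterP w : reflect (injective (act^~ w)) (all perml w).
Proof.
apply: (iffP idP).
  elim: w => [_ ? ? //|a w IHw] /= /andP[/injectiveP inj_a /IHw inj_w] q1 q2.
  by move/inj_w/inj_a.
elim: w => [//|a w IHw] inj_aw.
have inj_a : injective (delta a) by move=> q1 q2 eq12; apply: inj_aw; rewrite /= eq12.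
apply/andP; split; first exact/injectiveP.
apply: IHw => r1 r2.
have [g gK Kg] := injF_bij inj_a.
by rewrite -(Kg r1) -(Kg r2) => /inj_aw ->.
Qed.

Lemma in_Pi_i_mono i j w : i <= j -> Pi i w -> Pi j w.
Proof. by move=> le_ij /andP[perm_w size_w]; rewrite /in_Pi_i perm_w (leq_trans size_w). Qed.

Lemma in_Pi_i_rcons i w a : perml a -> Pi i w -> Pi i.+1 (rcons w a).
Proof.
by move=> perm_a /andP[perm_w size_w]; rewrite /in_Pi_i all_rcons perm_a perm_w size_rcons.
Qed.

Hypothesis full : full_transition_monoid delta.

Lemma perm_word (s : {perm Q}) : exists2 w, all perml w & forall q, act q w = s q.
Proof.
have [w act_w] := full s; exists w => //.
by apply/all_perm_letterP => q1 q2; rewrite !act_w; apply: perm_inj.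
Qed.

Section Invariance.
Variable M : rel Q.
Hypothesis M_homo : forall a, perml a -> {homo delta a : p q / M p q}.

Lemma homo_perm_word w : all perml w -> {homo act^~ w : p q / M p q}.
Proof.
elim: w => [_ p q //|a w IHw /andP[perm_a perm_w] p q Mpq].
exact: IHw (M_homo perm_a Mpq).
Qed.

(* 2-transitivity of the symmetric group. *)
Lemma homo_rel_distinct u v : u != v -> M u v -> forall p q, p != q -> M p q.
Proof.
move=> neq_uv Muv p q neq_pq; set v' := tperm u p v.
have [w1 perm_w1 act_w1] := perm_word (tperm u p).
have [w2 perm_w2 act_w2] := perm_word (tperm v' q).
have /homo_perm_word/(_ _ _ Muv) : all perml (w1 ++ w2) by rewrite all_cat perm_w1.
have neq_v'p : v' != p by rewrite /v' -{2}(tpermL u p) (inj_eq perm_inj) eq_sym.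
by rewrite !act_cat !act_w1 !act_w2 tpermL -/v' tpermL tpermD // eq_sym.
Qed.

End Invariance.

Lemma homo_set_full (S : {set Q}) s :
  (forall a, perml a -> {homo delta a : q / q \in S}) -> s \in S -> S = setT.
Proof.
move=> S_homo sS; apply/setP => q; rewrite inE.
have [w perm_w act_w] := perm_word (tperm s q).
have S_rel a : perml a -> {homo delta a : p1 p2 / [rel p _ | p \in S] p1 p2}.
  by move=> /S_homo S_a p1 p2 /S_a.
have := homo_perm_word S_rel perm_w (sS : [rel p _ | p \in S] s s).
by rewrite /= act_w tpermL.
Qed.

Definition short_orbit (i : nat) (d : Q) : {set Q} :=
  [set q | `[< exists2 w, Pi i w & act d w = q >]].

Lemma short_orbit_full d : short_orbit #|Q|.-1 d = setT.
Proof.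
have orbit_mono i : short_orbit i d \subset short_orbit i.+1 d.
  apply/subsetP => q; rewrite !inE => /asboolP[w Pi_w act_w].
  by apply/asboolP; exists w => //; apply: in_Pi_i_mono Pi_w.
have orbit_step i a :
    perml a -> {homo delta a : q / q \in short_orbit i d >-> q \in short_orbit i.+1 d}.
  move=> perm_a q; rewrite !inE => /asboolP[w Pi_w act_w].
  by apply/asboolP; exists (rcons w a); rewrite ?in_Pi_i_rcons // act_rcons act_w.
have d_orbit i : d \in short_orbit i d by rewrite inE; apply/asboolP; exists [::].
pose f i := #|Q| - #|short_orbit i d|.
have f_noninc i : f i.+1 <= f i by rewrite /f leq_sub2l // subset_leq_card.
have f_dec i : 0 < f i -> f i.+1 < f i.
  rewrite /f subn_gt0 => lt_orbit.
  have : short_orbit i d \proper short_orbit i.+1 d.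
    rewrite properEneq orbit_mono andbT; apply: contraTneq lt_orbit => eq_orbit.
    suff -> : short_orbit i d = setT by rewrite cardsT ltnn.
    apply: (homo_set_full (s := d)) => // a perm_a q.
    by rewrite {2}eq_orbit; apply: orbit_step.
  by move/proper_card; have := max_card (mem (short_orbit i.+1 d)); lia.
have f0 : f 0 <= #|Q|.-1.
  have : 0 < #|short_orbit 0 d| by apply/card_gt0P; exists d.
  by rewrite /f; lia.
apply/eqP; rewrite eqEcard subsetT cardsT.
by move: f0 (bounded_descent f_noninc f_dec #|Q|.-1); rewrite /f; lia.
Qed.

End PermutationLetters.

Section ExclDuplGraph.
Variables (Q Sigma : finType) (delta : Sigma -> Q -> Q).
Hypothesis full : full_transition_monoid delta.
Variables e d : Q.
Hypothesis neq_ed : e != d.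

Local Notation act := (act delta).
Local Notation perml := (is_perm_letter delta).
Local Notation Pi := (in_Pi_i delta).

(* Gamma_i with arbitrary distinct states [e], [d] in place of excl(x), dupl(x). *)
Definition gamma (i : nat) : rel Q :=
  fun p q => `[< exists2 w, Pi i w & p = act e w /\ q = act d w >].

Definition mutual (i : nat) : rel Q :=
  fun p q => connect (gamma i) p q && connect (gamma i) q p.

Lemma gamma_neq i p q : gamma i p q -> p != q.
Proof.
case/asboolP=> w /andP[perm_w _] [-> ->]; apply: contra neq_ed => /eqP act_ed.
by apply/eqP/(all_perm_letterP _ _ perm_w).
Qed.

Lemma gamma_mono i j : i <= j -> subrel (gamma i) (gamma j).
Proof.
move=> le_ij p q /asboolP[w Pi_w eq_pq].
by apply/asboolP; exists w; rewrite ?(in_Pi_i_mono le_ij).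
Qed.

Lemma gamma_shift i a :
  perml a -> {homo delta a : p q / gamma i p q >-> gamma i.+1 p q}.
Proof.
move=> perm_a p q /asboolP[w Pi_w [-> ->]]; apply/asboolP.
by exists (rcons w a); rewrite ?in_Pi_i_rcons // !act_rcons.
Qed.

Lemma gamma_has_pred q : exists p, gamma #|Q|.-1 p q.
Proof.
have : q \in short_orbit delta #|Q|.-1 d by rewrite short_orbit_full ?inE.
by rewrite inE => /asboolP[w Pi_w act_w]; exists (act e w); apply/asboolP; exists w.
Qed.

Lemma mutual_equiv i : equivalence_rel (mutual i).
Proof.
apply/equivalence_relP; split=> [p|p q /andP[pq qp] r]; first by rewrite /mutual connect0.
apply/andP/andP=> -[r1 r2].
  by split; [apply: connect_trans qp r1 | apply: connect_trans r2 pq].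
by split; [apply: connect_trans pq r1 | apply: connect_trans r2 qp].
Qed.

Lemma mutual_mono i j : i <= j -> subrel (mutual i) (mutual j).
Proof.
move=> le_ij.
have conn_mono : subrel (connect (gamma i)) (connect (gamma j)).
  by apply: connect_sub => p q /(gamma_mono le_ij)/connect1.
by move=> p q /andP[/conn_mono pq /conn_mono qp]; apply/andP.
Qed.

Lemma mutual_shift i a :
  perml a -> {homo delta a : p q / mutual i p q >-> mutual i.+1 p q}.
Proof.
move=> perm_a p q /andP[pq qp].
by apply/andP; split; apply: connect_homo (gamma_shift perm_a) _ _ _.
Qed.

Lemma mutual_nontrivial : exists u v, u != v /\ mutual #|Q|.-1 u v.
Proof.
have [u [v [uv vu]]] := exists_cycle d gamma_has_pred.
by exists u, v; rewrite (gamma_neq uv) /mutual connect1.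
Qed.

Lemma nclasses_mutual_step i :
  (exists u v, u != v /\ mutual i u v) -> 1 < nclasses (mutual i) ->
  nclasses (mutual i.+1) < nclasses (mutual i).
Proof.
move=> [u [v [neq_uv muv]]] gt1.
apply: nclasses_lt; [exact: mutual_equiv | exact: mutual_equiv | exact: mutual_mono |].
move=> stable; move: gt1; rewrite ltnNge => /negP; apply; apply/nclasses_le1P.
  exact: mutual_equiv.
move=> p q; have [<-|neq_pq] := eqVneq p q; first by rewrite /mutual connect0.
apply: homo_rel_distinct neq_uv muv p q neq_pq => // a perm_a p' q'.
by move/(mutual_shift perm_a)/stable.
Qed.

Lemma gamma_strongly_connected p q : connect (gamma (#|Q|.-1 + #|Q|.-2)) p q.
Proof.
have [u [v [neq_uv muv]]] := mutual_nontrivial.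
pose f j := nclasses (mutual (#|Q|.-1 + j)).
have f_noninc j : f j.+1 <= f j.
  apply: nclasses_le; [exact: mutual_equiv | exact: mutual_equiv |].
  by apply: mutual_mono; rewrite addnS.
have f_dec j : 1 < f j -> f j.+1 < f j.
  rewrite /f addnS; apply: nclasses_mutual_step.
  by exists u, v; split; last by apply: mutual_mono muv; apply: leq_addr.
have f0 : f 0 < #|Q|.
  by rewrite /f addn0; apply: nclasses_lt_card neq_uv muv; apply: mutual_equiv.
have : f #|Q|.-2 <= 1 by move: f0 (bounded_descent f_noninc f_dec #|Q|.-2); lia.
by move/(nclasses_le1P (mutual_equiv _))/(_ p q)/andP => [].
Qed.

End ExclDuplGraph.

Theorem lemma2 (n : nat) (Q Sigma : finType) (delta : Sigma -> Q -> Q)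
  (x : Sigma) :
  2 <= n -> #|Q| = n ->
  full_transition_monoid delta ->
  rank_pred delta x ->
  strongly_connected (Gamma_edge delta x (2 * n - 3)).
Proof.
move=> n_ge2 card_Q full rank_x.
have /subsetPn[e _ excl_e] : ~~ (setT \subset image_of delta x).
  rewrite subTset; apply/eqP => image_full.
  by move: rank_x; rewrite /rank_pred image_full cardsT; lia.
have [q1 [q2 neq_q12 eq_q12]] : exists q1, exists2 q2, q1 != q2 & delta x q1 = delta x q2.
  apply/injectivePn/negP => /injectiveP inj_x.
  by move: rank_x; rewrite /rank_pred /image_of card_imset // card_Q; lia.
set d := delta x q1.
have dupl_d : is_dupl delta x d by exists q1, q2; split; [apply/eqP | split].
have neq_ed : e != d by apply: contraNneq excl_e => ->; apply: imset_f.
move=> p q; apply: (@connect_clos_refl_trans _ (gamma delta e d (2 * n - 3))).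
  by move=> p' q' /asboolP[w Pi_w [-> ->]]; exists e, d, w.
by rewrite (_ : 2 * n - 3 = #|Q|.-1 + #|Q|.-2); [apply: gamma_strongly_connected | lia].
Qed.
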